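(* Let $k,\ell,n$ be integers with $2\le \ell<k/2$ and $n\ge1$, and let the sets $A_i,B_i,U_i$, $V$ and the $k$-graph $H_1^2$ be as in the context. Then every $(\ell,k)$-path all of whose edges belong to $H_1^2$ has at most two edges.
   Context: Let $\{A_i,B_i: i=1,\dots,2n\}$ be $4n$ pairwise disjoint finite sets with $|A_i|=2\lfloor k/2\rfloor+\ell$ for $1\le i\le n$ and $|A_i|=2k-2\ell-3$ for $n+1\le i\le 2n$. Put $U_i=A_i\cup B_i$ and $V=\bigcup_{i=1}^{2n}U_i$. For $S\subseteq V$ let $tr(S)=\{i: S\cap U_i\ne\emptyset\}$. Define $H_1^2$ as the set of all $k$-subsets $e\subseteq V$ for which there is $i\in\{1,\dots,n\}$ with $tr(e)=\{i,n+i\}$, $|A_i\cap e|=\ell+1$ and $|A_{n+i}\cap e|=k-\ell-1$. An $(\ell,k)$-path is a $k$-graph with distinct vertices $v_1,\dots,v_s$, $s\equiv\ell\pmod{k-\ell}$, $s\ge k$, and edges $\{v_{i(k-\ell)+1},\dots,v_{i(k-\ell)+k}\}$, $i=0,\dots,(s-k)/(k-\ell)$. *)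

From mathcomp Require Import all_boot all_order.
Set Implicit Arguments. Unset Strict Implicit. Unset Printing Implicit Defensive.

Definition pairwise_disjoint_AB (T : finType) (n : nat) (A B : nat -> {set T}) :=
  (forall i j, 1 <= i <= 2 * n -> 1 <= j <= 2 * n -> i != j ->
     [disjoint A i & A j] /\ [disjoint B i & B j]) /\
  (forall i j, 1 <= i <= 2 * n -> 1 <= j <= 2 * n -> [disjoint A i & B j]).

Definition U (T : finType) (A B : nat -> {set T}) (i : nat) : {set T} := A i :|: B i.

Definition Vset (T : finType) (n : nat) (A B : nat -> {set T}) : {set T} :=
  \bigcup_(1 <= i < (2 * n).+1) U A B i.

Definition tr (T : finType) (n : nat) (A B : nat -> {set T}) (S : {set T}) : pred nat :=
  fun i => (1 <= i <= 2 * n) && (S :&: U A B i != set0).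

Definition H12 (T : finType) (n k l : nat) (A B : nat -> {set T}) (e : {set T}) : Prop :=
  e \subset Vset n A B /\ #|e| = k /\
  exists i, 1 <= i <= n /\
    (forall j, tr n A B e j <-> (j = i \/ j = n + i)) /\
    #|A i :&: e| = l.+1 /\ #|A (n + i) :&: e| = k - l - 1.

Definition is_lk_path_seq (T : finType) (l k : nat) (v : seq T) : Prop :=
  uniq v /\ k <= size v /\ size v %% (k - l) = l %% (k - l).

Definition num_edges (l k : nat) (s : nat) : nat := (s - k) %/ (k - l) + 1.

(* the i-th edge (i = 0, ..., (s-k)/(k-l)):
   {v_{i(k-l)+1}, ..., v_{i(k-l)+k}} *)
Definition path_edge (T : finType) (l k : nat) (v : seq T) (i : nat) : {set T} :=
  [set x in take k (drop (i * (k - l)) v)].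

From mathcomp Require Import all_boot all_order.
From mathcomp Require Import zify.

(* Consecutive edges of an (l,k)-path overlap, and an edge of H_1^2 lies
   inside A_i :|: A_(n+i) for a unique i, so all edges of a path in H_1^2
   use the same i.  With three edges, the first and the third are disjoint
   because 2 (k - l) >= k, and each meets A_(n+i) in k - l - 1 vertices;
   hence 2 (k - l - 1) <= |A_(n+i)| = 2k - 2l - 3, which is absurd. *)

Section H12Edges.

Context {T : finType} {n : nat} {A B : nat -> {set T}}.
Hypothesis disjAB : pairwise_disjoint_AB n A B.

Lemma mem_A_inj {p q x} : 1 <= p <= 2 * n -> 1 <= q <= 2 * n ->
  x \in A p -> x \in A q -> p = q.
Proof.
move=> Hp Hq xp xq; apply/eqP; apply: contraT => pq.
have [disj_pq _] := disjAB.1 p q Hp Hq pq.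
by rewrite (disjointFl disj_pq xq) in xp.
Qed.

Lemma A_pair_index_unique {a b x} : 1 <= a <= n -> 1 <= b <= n ->
  x \in A a :|: A (n + a) -> x \in A b :|: A (n + b) -> a = b.
Proof.
move=> Ha Hb; rewrite !inE => /orP[] xa /orP[] xb.
- by apply: (mem_A_inj _ _ xa xb); lia.
- by have := mem_A_inj (_ : 1 <= a <= 2 * n) (_ : 1 <= n + b <= 2 * n) xa xb; lia.
- by have := mem_A_inj (_ : 1 <= n + a <= 2 * n) (_ : 1 <= b <= 2 * n) xa xb; lia.
- by have := mem_A_inj (_ : 1 <= n + a <= 2 * n) (_ : 1 <= n + b <= 2 * n) xa xb; lia.
Qed.

Lemma H12_sub_A_pair {k l e} : l < k -> H12 n k l A B e ->
  exists i, [/\ 1 <= i <= n, e \subset A i :|: A (n + i) &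
                #|A (n + i) :&: e| = k - l - 1].
Proof.
move=> lt_lk [_ [card_e [i [Hi [_ [card_ei card_eni]]]]]].
exists i; split=> //.
have disj_i : [disjoint A i & A (n + i)].
  by have [] := disjAB.1 i (n + i) (_ : _ <= _ <= _) (_ : _ <= _ <= _) (_ : _ != _); lia.
have disj_e : [disjoint A i :&: e & A (n + i) :&: e].
  by apply: disjointWl (subsetIl _ _) _; apply: disjointWr (subsetIl _ _) _.
have card_eI : #|e :&: (A i :|: A (n + i))| = #|e|.
  move: (leq_card_setU (A i :&: e) (A (n + i) :&: e)).2; rewrite disj_e => /eqP.
  by rewrite [e :&: _]setIC setIUl card_ei card_eni card_e; lia.
apply/setIidPl/eqP.
by rewrite -(subset_leqif_cards (subsetIl _ _)).2 card_eI.
Qed.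

End H12Edges.

Section PathEdges.

Context {T : finType} {l k : nat} {v : seq T}.

Lemma nth_mem_path_edge x0 i j :
  j < k -> i * (k - l) + j < size v -> nth x0 v (i * (k - l) + j) \in path_edge l k v i.
Proof.
move=> lt_jk lt_v; rewrite inE -nth_drop -(nth_take x0 lt_jk).
by apply: mem_nth; rewrite size_take_min size_drop leq_min lt_jk ltn_subRL.
Qed.

Lemma path_edges_meet i : l < k -> 0 < l -> i.+1 * (k - l) < size v ->
  exists2 x, x \in path_edge l k v i & x \in path_edge l k v i.+1.
Proof.
move=> lt_lk l_gt0 lt_v.
have [x0 _] : exists x0 : T, True by case: v lt_v => [|x0 w] //; exists x0.
exists (nth x0 v (i.+1 * (k - l))).
- by rewrite mulSnr nth_mem_path_edge -?mulSnr //; lia.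
- by rewrite -[X in nth _ _ X]addn0 nth_mem_path_edge ?addn0 //; lia.
Qed.

Lemma path_edges_disjoint i j : uniq v -> i * (k - l) + k <= j * (k - l) ->
  [disjoint path_edge l k v i & path_edge l k v j].
Proof.
rewrite /path_edge; move: (i * (k - l)) (j * (k - l)) => p q uniq_v le_pq.
set w := drop p v.
have -> : drop q v = drop (q - p - k) (drop k w) by rewrite !drop_drop; congr drop; lia.
rewrite -setI_eq0; apply/set0Pn=> -[x]; rewrite !inE => /andP[x_hd /mem_take /mem_drop x_tl].
have := drop_uniq p uniq_v.
rewrite -/w -(cat_take_drop k w) cat_uniq => /and3P[_ /hasP no_common _].
by apply: no_common; exists x.
Qed.

End PathEdges.

Lemma card_setI_disjoint_le {T : finType} (X : {set T}) {E F : {set T}} :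
  [disjoint E & F] -> #|X :&: E| + #|X :&: F| <= #|X|.
Proof.
move=> disj_EF; have disj_XEF : [disjoint X :&: E & X :&: F].
  by apply: disjointWl (subsetIr _ _) _; apply: disjointWr (subsetIr _ _) _.
move: (leq_card_setU (X :&: E) (X :&: F)).2; rewrite disj_XEF => /eqP <-.
by apply: subset_leq_card; rewrite -setIUr subsetIl.
Qed.

Theorem fact3p1 (T : finType) (k l n : nat) (A B : nat -> {set T}) :
  2 <= l -> 2 * l < k -> 1 <= n ->
  pairwise_disjoint_AB n A B ->
  (forall i, 1 <= i <= n -> #|A i| = 2 * k./2 + l) ->
  (forall i, n + 1 <= i <= 2 * n -> #|A i| = 2 * k - 2 * l - 3) ->
  forall v : seq T,
    is_lk_path_seq l k v ->
    (forall i, i < num_edges l k (size v) -> H12 n k l A B (path_edge l k v i)) ->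
    num_edges l k (size v) <= 2.
Proof.
move=> l_ge2 lt_2lk n_gt0 disjAB _ card_An v [uniq_v [le_kv _]] inH12.
rewrite leqNgt; apply/negP=> three_edges.
have lt_lk : l < k by lia.
have le_v : 2 * (k - l) + k <= size v.
  have : 2 <= (size v - k) %/ (k - l) by move: three_edges; rewrite /num_edges; lia.
  by rewrite leq_divRL; lia.
have edge_in_H12 i : i <= 2 -> H12 n k l A B (path_edge l k v i).
  by move=> le_i2; apply: inH12; lia.
have [i0 [Hi0 sub0 card0]] := H12_sub_A_pair disjAB lt_lk (edge_in_H12 0 isT).
have [i1 [Hi1 sub1 _]] := H12_sub_A_pair disjAB lt_lk (edge_in_H12 1 isT).
have [i2 [Hi2 sub2 card2]] := H12_sub_A_pair disjAB lt_lk (edge_in_H12 2 isT).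
have [x x0e x1e] : exists2 x, x \in path_edge l k v 0 & x \in path_edge l k v 1.
  by apply: path_edges_meet; lia.
have [y y1e y2e] : exists2 y, y \in path_edge l k v 1 & y \in path_edge l k v 2.
  by apply: path_edges_meet; lia.
have eq01 := A_pair_index_unique disjAB Hi0 Hi1 (subsetP sub0 x x0e) (subsetP sub1 x x1e).
have eq12 := A_pair_index_unique disjAB Hi1 Hi2 (subsetP sub1 y y1e) (subsetP sub2 y y2e).
subst i1 i2.
have disj02 : [disjoint path_edge l k v 0 & path_edge l k v 2].
  by apply: path_edges_disjoint; lia.
have := card_setI_disjoint_le (A (n + i0)) disj02.
by rewrite card0 card2 card_An; lia.
Qed.
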